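(* Let $R$ be a rack, $X$ an $R$-set and $p:X\to R$ a map with $p(x\cdot r)=p(x)\lhd r$ for all $x,r$ (i.e. a crossed module of racks $p:X\to R$). Let $N_X(R)$ and $N_R(R)$ be the cubical nerves defined below, and $p_*:N_X(R)\to N_R(R)$ the map $(x,r_1,\dots,r_n)\mapsto(p(x),r_1,\dots,r_n)$. Suppose that the rack space $B_R(R)=|N_R(R)|$ is arcwise connected and locally arcwise connected. Then the geometric realization $|p_*|:B_X(R)\to B_R(R)$ is a covering map of topological spaces.
   Context: A (right) rack is a set with a binary operation $\lhd$ such that each $x\mapsto x\lhd y$ is bijective and $(x\lhd y)\lhd z=(x\lhd z)\lhd(y\lhd z)$. An action of a rack $R$ on a set $Y$ is a family of bijections $y\mapsto y\cdot r$ with $(y\cdot r)\cdot r'=(y\cdot r')\cdot(r\lhd r')$. For such an action, the cubical set ($\Box$-set, no degeneracies) $N_Y(R)$ has as $n$-cubes the tuples $(y,r_1,\dots,r_n)\in Y\times R^n$, with face maps $\partial_i^0(y,r_1,\dots,r_n)=(y,r_1,\dots,\widehat{r_i},\dots,r_n)$ and $\partial_i^1(y,r_1,\dots,r_n)=(y\cdot r_i,\,r_1\lhd r_i,\dots,r_{i-1}\lhd r_i,\,r_{i+1},\dots,r_n)$ for $1\le i\le n$ (its 1-skeleton with 2-cubes as preferred squares is the action rack trunk: edges $y\xrightarrow{r}y\cdot r$). Its geometric realization $B_Y(R)=|N_Y(R)|=\big(\bigsqcup_n N_Y(R)_n\times[0,1]^n\big)/\!\sim$, glued along the face maps, is the rack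 space. $N_R(R)$ is the case $Y=R$ with $R$ acting on itself by $r\cdot r'=r\lhd r'$. *)

From HB Require Import structures.
From Stdlib Require Import Relation_Operators.
From mathcomp Require Import all_boot all_order all_algebra generic_quotient.
From mathcomp Require Import all_classical all_reals all_analysis.
Import Order.TTheory GRing.Theory Num.Theory.
Import numFieldNormedType.Exports.

Set Implicit Arguments.
Unset Strict Implicit.
Unset Printing Implicit Defensive.

Local Open Scope classical_set_scope.
Local Open Scope ring_scope.
Local Open Scope quotient_scope.

Definition is_rack {R : Type} (op : R -> R -> R) : Prop :=
  (forall y : R, bijective (fun x => op x y)) /\
  (forall x y z : R, op (op x y) z = op (op x z) (op y z)).

Definition is_rack_action {R Y : Type} (op : R -> R -> R) (act : Y -> R -> Y)
  : Prop :=
  (forall r : R, bijective (fun y => act y r)) /\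
  (forall (y : Y) (r r' : R), act (act y r) r' = act (act y r') (op r r')).

Section Nerve.
Context (K : realType) (Y R : Type) (act : Y -> R -> Y) (op : R -> R -> R).

Definition cells := {n : nat & (Y * n.-tuple R)%type}.
HB.instance Definition _ := gen_eqMixin cells.
HB.instance Definition _ := gen_choiceMixin cells.

(** face maps (0-based index i : 'I_n.+1 standing for the paper's i+1);
    e = false is d^0_i, e = true is d^1_i *)
Definition face (n : nat) (c : Y * (n.+1).-tuple R) (i : 'I_n.+1) (e : bool)
  : cells :=
  existT _ n
    (if e then
       (act c.1 (tnth c.2 i),
        [tuple if (j < i)%N then op (tnth c.2 (lift i j)) (tnth c.2 i)
               else tnth c.2 (lift i j) | j < n])
     else (c.1, [tuple tnth c.2 (lift i j) | j < n])).

Definition cube (n : nat) : set 'rV[K]_n :=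
  [set t | forall i : 'I_n, 0 <= t ord0 i <= 1].
Arguments cube : clear implicits.
Definition cubeT (n : nat) := set_type (cube n).

Definition coface (n : nat) (i : 'I_n.+1) (e : bool) (t : 'rV[K]_n)
  : 'rV[K]_n.+1 :=
  \row_k (match unlift i k with Some j => t ord0 j | None => (e : nat)%:R end).

(** disjoint union of N_Y(R)_n x [0,1]^n over all n
    (topologically: disjoint sum of the cubes, one per cell) *)
Definition tot := {c : cells & cubeT (projT1 c)}.

Definition face_rel (a b : tot) : Prop :=
  exists (n : nat) (c : Y * (n.+1).-tuple R) (i : 'I_n.+1) (e : bool)
         (ta : cubeT n) (tb : cubeT n.+1),
    a = existT _ (face c i e) ta /\
    b = existT (fun c => cubeT (projT1 c)) (existT _ n.+1 c) tb /\
    set_val tb = coface i e (set_val ta).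

Definition glue_rel (a b : tot) : bool :=
  `[< clos_refl_sym_trans tot face_rel a b >].

Lemma glue_rel_refl : reflexive glue_rel.
Proof. by move=> a; apply/asboolP; apply: rst_refl. Qed.

Lemma glue_rel_sym : symmetric glue_rel.
Proof.
by move=> a b; apply/asboolP/asboolP => H; apply: rst_sym.
Qed.

Lemma glue_rel_trans : transitive glue_rel.
Proof.
by move=> b a c /asboolP H1 /asboolP H2; apply/asboolP; apply: rst_trans H2.
Qed.

Definition glue_equiv := EquivRel glue_rel glue_rel_refl glue_rel_sym
  glue_rel_trans.

Definition realization := {eq_quot glue_equiv}.
HB.instance Definition _ := Topological.copy realization
  (quotient_topology realization).
HB.instance Definition _ := Quotient.on realization.

End Nerve.

(** B_R(R) is [realization K op op] (R acting on itself by op). *)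

Section Realized_map.
Context (K : realType) (X Y R : Type) (actX : X -> R -> X) (actY : Y -> R -> Y)
  (op : R -> R -> R) (p : X -> Y).

Definition cells_map (c : cells X R) : cells Y R :=
  existT _ (projT1 c) (p (projT2 c).1, (projT2 c).2).

Definition tot_map (t : tot K X R) : tot K Y R :=
  existT (fun c => cubeT K (projT1 c)) (cells_map (projT1 t)) (projT2 t).

Definition realization_map (q : realization K actX op) : realization K actY op :=
  \pi_(realization K actY op) (tot_map (repr q)).

End Realized_map.
Arguments realization_map K {X Y R} actX actY op p q.

Section Topo.
Context (K : realType).

Definition path_in {T : topologicalType} (A : set T) (x y : T) : Prop :=
  exists f : K -> T, {within `[0, 1], continuous f} /\
    f 0 = x /\ f 1 = y /\ f @` `[0, 1] `<=` A.

Definition arcwise_connected_set {T : topologicalType} (A : set T) : Prop :=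
  forall x y, A x -> A y -> path_in A x y.

Definition arcwise_connected (T : topologicalType) : Prop :=
  arcwise_connected_set (@setT T).

Definition locally_arcwise_connected (T : topologicalType) : Prop :=
  forall (x : T) (U : set T), nbhs x U ->
    exists V : set T, nbhs x V /\ V `<=` U /\ arcwise_connected_set V.
End Topo.

Definition homeo_onto {E B : topologicalType} (f : E -> B) (A : set E)
  (U : set B) : Prop :=
  {within A, continuous f} /\
  exists g : B -> E,
    (forall a, A a -> U (f a) /\ g (f a) = a) /\
    (forall u, U u -> A (g u) /\ f (g u) = u) /\
    {within U, continuous g}.

Definition evenly_covered {E B : topologicalType} (f : E -> B) (U : set B)
  : Prop :=
  exists V : set (set E),
    (forall A, V A -> open A) /\
    (forall A A', V A -> V A' -> A `&` A' !=set0 -> A = A') /\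
    f @^-1` U = \bigcup_(A in V) A /\
    (forall A, V A -> homeo_onto f A U).

(** covering map (fibres allowed to be empty, as in Hatcher) *)
Definition covering_map {E B : topologicalType} (f : E -> B) : Prop :=
  continuous f /\
  forall b : B, exists U : set B, open U /\ U b /\ evenly_covered f U.

From HB Require Import structures.
From Stdlib Require Import Relation_Operators.
From mathcomp Require Import all_boot all_order all_algebra generic_quotient.
From mathcomp Require Import all_classical all_reals all_analysis.
From mathcomp Require Import zify lra.
Set Implicit Arguments.
Unset Strict Implicit.
Unset Printing Implicit Defensive.

Import Order.TTheory GRing.Theory Num.Theory numFieldNormedType.Exports.
Local Open Scope classical_set_scope.
Local Open Scope ring_scope.
Local Open Scope quotient_scope.

(* Let b be a point of B_R(R) with a representative (c, t), and pick eps so that the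
   coordinates of t lying in (0,1) keep a distance 2 eps from 0 and 1.  In any point of
   any cube, send each coordinate below eps to the face d^0 and each coordinate above
   1 - eps to the face d^1.  The cube reached this way (its "collapse"), and whether the
   remaining coordinates are eps-close to the free coordinates of t, are invariant under
   the face identifications; so the points with the collapse of b that are eps-close to
   b form a well-defined open neighbourhood U of b.  As p is equivariant and each r acts
   bijectively on X, a point of U has exactly one preimage whose collapsed vertex is a
   given x over the collapsed vertex of b: its vertex is obtained by unwinding the
   collapsed labels from x.  These preimages form open sheets, indexed by the fibre of
   p, each mapped homeomorphically onto U. *)

Section TopLabels.
Variables (Y R : Type) (act : Y -> R -> Y) (op : R -> R -> R).

(* A pattern marks each coordinate of a cube as free ([None]) or as collapsed onto the
   face d^e ([Some e]); collapsing the marked coordinates of (y, s) gives the cube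
   (collapse_vertex y s pat, collapse_labels s pat). *)
Definition top_labels (s : seq R) (pat : seq (option bool)) : seq R :=
  mask [seq o == Some true | o <- pat] s.

Definition collapse_vertex (y : Y) (s : seq R) pat : Y :=
  foldl act y (top_labels s pat).

Definition face_vertex (y : Y) (r : R) (e : bool) : Y := if e then act y r else y.

Definition face_prefix (s : seq R) (r : R) (e : bool) : seq R :=
  if e then map (op^~ r) s else s.

Hypothesis actA : forall y r r', act (act y r) r' = act (act y r') (op r r').

Lemma foldl_act_op (l : seq R) y r :
  act (foldl act y l) r = foldl act (act y r) (map (op^~ r) l).
Proof. by elim: l y => [|a l IH] y //=; rewrite IH actA. Qed.

Lemma top_labels_face sa sb r pa pb e : size pa = size sa ->
  top_labels (sa ++ r :: sb) (pa ++ Some e :: pb) =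
  top_labels sa pa ++ (if e then [:: r] else [::]) ++ top_labels sb pb.
Proof. by move=> hs; rewrite /top_labels map_cat mask_cat ?size_map //; case: e. Qed.

Lemma collapse_vertex_face sa sb r pa pb e y : size pa = size sa ->
  collapse_vertex y (sa ++ r :: sb) (pa ++ Some e :: pb) =
  collapse_vertex (face_vertex y r e) (face_prefix sa r e ++ sb) (pa ++ pb).
Proof.
move=> hs; rewrite /collapse_vertex top_labels_face //.
rewrite /top_labels map_cat mask_cat ?size_map; last by case: (e); rewrite ?size_map.
case: e => //=; rewrite foldl_cat /= foldl_act_op foldl_cat.
by rewrite -map_mask.
Qed.

End TopLabels.

Section CollapseLabels.
Variables (R : Type) (op : R -> R -> R).
Hypothesis opA : forall x y z, op (op x y) z = op (op x z) (op y z).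

Fixpoint collapse_labels (s : seq R) (pat : seq (option bool)) : seq R :=
  match s, pat with
  | r :: s', None :: pat' => foldl op r (top_labels s' pat') :: collapse_labels s' pat'
  | _ :: s', _ :: pat' => collapse_labels s' pat'
  | _, _ => [::]
  end.

Lemma size_collapse_labels s pat : size s = size pat ->
  size (collapse_labels s pat) = count_mem None pat.
Proof. by elim: s pat => [|r s IH] [|[[]|] pa] //= [] /IH ->. Qed.

Lemma collapse_labels_face sa sb r pa pb e : size pa = size sa ->
  collapse_labels (sa ++ r :: sb) (pa ++ Some e :: pb) =
  collapse_labels (face_prefix op sa r e ++ sb) (pa ++ pb).
Proof.
elim: sa pa => [|a sa IH] [|o pa] //=; first by case: e.
move=> [] hs.
have -> : face_prefix op (a :: sa) r e = (if e then op a r else a) :: face_prefix op sa r e.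
  by case: (e).
case: o => [[]|] /=; rewrite ?IH //; congr (_ :: _).
rewrite top_labels_face // /top_labels map_cat mask_cat ?size_map; last first.
  by case: (e); rewrite ?size_map.
case: (e) => //=; rewrite foldl_cat /= foldl_cat (foldl_act_op opA).
by rewrite -map_mask.
Qed.

End CollapseLabels.

Section Insert.
Variable T : Type.

Definition insert_at (i : nat) (x : T) (u : seq T) := take i u ++ x :: drop i u.

Lemma size_insert_at i x u : (i <= size u)%N -> size (insert_at i x u) = (size u).+1.
Proof.
by move=> hi; rewrite size_cat /= size_take_min size_drop (minn_idPl hi) addnS subnKC.
Qed.

Lemma nth_insert_at (d : T) i x u k : (i <= size u)%N ->
  nth d (insert_at i x u) k =
  if (k < i)%N then nth d u k else if k == i then x else nth d u k.-1.
Proof.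
move=> hi; rewrite nth_cat size_take_min (minn_idPl hi).
case: ltnP => hk; first by rewrite nth_take.
case: eqVneq => [->|hne]; first by rewrite subnn.
case: k hk hne => [|k] hk hne; first by case: i hi hk hne.
by rewrite subSn /= ?nth_drop; [congr nth|]; lia.
Qed.

Lemma all2_cat (r : T -> T -> bool) s1 s2 t1 t2 : size s1 = size t1 ->
  all2 r (s1 ++ s2) (t1 ++ t2) = all2 r s1 t1 && all2 r s2 t2.
Proof. by move: s1 t1; apply: seq_ind2 => //= x y s1 t1 _ ->; rewrite andbA. Qed.

Lemma all2_insert_at (r : T -> T -> bool) i a b u v :
  (i <= size u)%N -> size u = size v ->
  all2 r (insert_at i a u) (insert_at i b v) = r a b && all2 r u v.
Proof.
move=> hi huv; have hi' : (i <= size v)%N by rewrite -huv.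
rewrite all2_cat /=; last by rewrite !size_takel.
rewrite -[u](cat_take_drop i) -[v](cat_take_drop i) [in RHS]all2_cat ?size_takel //.
by rewrite !cat_take_drop andbCA.
Qed.

End Insert.

Lemma map_insert_at (T U : Type) (f : T -> U) i x u :
  map f (insert_at i x u) = insert_at i (f x) (map f u).
Proof. by rewrite /insert_at map_cat /= map_take map_drop. Qed.

Section Coordinates.
Variable K : realType.

Definition coords n (t : 'rV[K]_n) : seq K := [seq t ord0 k | k <- enum 'I_n].

Lemma size_coords n (t : 'rV[K]_n) : size (coords t) = n.
Proof. by rewrite size_map size_enum_ord. Qed.

Lemma nth_coords n (t : 'rV[K]_n) (k : 'I_n) : nth 0 (coords t) k = t ord0 k.
Proof. by rewrite (nth_map k) ?size_enum_ord // nth_ord_enum. Qed.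

Lemma coords_coface n (i : 'I_n.+1) (e : bool) (t : 'rV[K]_n) :
  coords (coface i e t) = insert_at i e%:R (coords t).
Proof.
have hi : (i <= size (coords t))%N by rewrite size_coords -ltnS.
apply: (@eq_from_nth _ 0); first by rewrite size_insert_at // !size_coords.
move=> k; rewrite size_coords => hk.
rewrite (nth_coords _ (Ordinal hk)) nth_insert_at // /coface mxE.
case: unliftP => [j|] /= /(congr1 val) /= ->; last by rewrite ltnn eqxx.
rewrite /bump; case: (leqP i j) => hij; last by rewrite add0n hij nth_coords.
by rewrite add1n ltnNge (leqW hij) /= gtn_eqF ?ltnS // nth_coords.
Qed.

Lemma all2_coords n (r : K -> K -> bool) (t : 'rV[K]_n) (v : seq K) :
  size v = n -> all2 r (coords t) v = [forall k : 'I_n, r (t ord0 k) (nth 0 v k)].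
Proof.
move=> hv; rewrite all2E size_coords hv eqxx /=.
have hz : size (zip (coords t) v) = n by rewrite size_zip size_coords hv minnn.
apply/(all_nthP (0, 0))/forallP => [h k|h k]; rewrite ?hz.
  by have := h k; rewrite hz nth_zip ?size_coords ?hv // nth_coords; apply.
by move=> hk; rewrite nth_zip ?size_coords ?hv // (nth_coords _ (Ordinal hk)); exact: h.
Qed.

End Coordinates.

Section Classification.
Variables (K : realType) (eps : K).

Definition classify (v : K) : option bool :=
  if v < eps then Some false else if 1 - eps < v then Some true else None.

Fixpoint pattern_point (pat : seq (option bool)) (ts : seq K) : seq K :=
  match pat with
  | [::] => [::]
  | None :: pat' => head 0 ts :: pattern_point pat' (behead ts)
  | Some e :: pat' => e%:R :: pattern_point pat' ts
  end.

Definition near (u v : seq K) : bool := all2 (fun a b => `|a - b| < eps) u v.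

Definition within_margin (ts : seq K) : bool :=
  all (fun v => (2 * eps < v) && (v < 1 - 2 * eps)) ts.

Lemma size_pattern_point pat ts : size (pattern_point pat ts) = size pat.
Proof. by elim: pat ts => [|[e|] pat IH] ts //=; rewrite IH. Qed.

Lemma pattern_point_insert_at i e pat ts : (i <= size pat)%N ->
  pattern_point (insert_at i (Some e) pat) ts = insert_at i e%:R (pattern_point pat ts).
Proof.
elim: pat i ts => [|o pat IH] [|i] ts hi //=; rewrite /insert_at ?take0 ?drop0 //.
by case: o hi => [e'|] /= hi; rewrite -!/(insert_at _ _ _) IH.
Qed.

Hypothesis eps_gt0 : 0 < eps.
Hypothesis eps_le : eps <= 4^-1.

Lemma classify_nat (e : bool) : classify e%:R = Some e.
Proof.
have he0 := eps_gt0; have he1 := eps_le.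
rewrite /classify; case: e; rewrite /= ?mulr1n ?mulr0n; last by rewrite he0.
have -> : (1 < eps) = false by apply/negbTE; rewrite -leNgt; lra.
by have -> : 1 - eps < 1 by lra.
Qed.

Lemma near_insert_at i a b u v : (i <= size u)%N -> size u = size v ->
  `|a - b| < eps -> near (insert_at i a u) (insert_at i b v) = near u v.
Proof. by move=> hi huv hab; rewrite /near all2_insert_at // hab. Qed.

Lemma classify_near pat u ts : within_margin ts ->
  (count_mem None pat <= size ts)%N -> near u (pattern_point pat ts) ->
  map classify u = pat.
Proof.
have he0 := eps_gt0; have he1 := eps_le.
rewrite /near; elim: pat u ts => [|o pat IH] [|v u] ts //=; first by case: o.
case: o => [e|] /= hts hc /andP [hv hu].
  rewrite (IH u ts) //; congr (_ :: _); move: hv; rewrite /classify ltr_norml.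
  case: e; rewrite /= ?mulr1n ?mulr0n => /andP [? ?]; last by rewrite ifT //; lra.
  by rewrite ifF ?ifT //; [lra | apply/negbTE; rewrite -leNgt; lra].
case: ts hts hc hv hu => [|w ts] //= /andP [/andP [hw1 hw2] hts] hc hv hu.
rewrite (IH u ts) //; congr (_ :: _); move: hv; rewrite ltr_norml /classify.
by move=> /andP [? ?]; rewrite !ifF //; apply/negbTE; rewrite -leNgt; lra.
Qed.

End Classification.

Lemma exists_margin (K : realType) (u : seq K) : exists eps : K,
  [/\ 0 < eps, eps <= 4^-1 &
      forall v, v \in u -> 0 < v < 1 -> 2 * eps < v < 1 - 2 * eps].
Proof.
elim: u => [|a u [e [he0 he1 H]]]; first by exists 4^-1; split.
have [/andP [a0 a1]|ha] := boolP (0 < a < 1); last first.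
  by exists e; split => // v; rewrite in_cons => /orP [/eqP ->|/H //]; rewrite (negbTE ha).
pose e' := Num.min e (Num.min (a / 4) ((1 - a) / 4)).
have [he'e hea hea'] : [/\ e' <= e, e' <= a / 4 & e' <= (1 - a) / 4].
  by rewrite !ge_min !lexx !orbT.
exists e'; split; first by rewrite !lt_min he0 /=; apply/andP; split; lra.
  by apply: le_trans he1.
move=> v; rewrite in_cons => /orP [/eqP -> _|/H hv /hv /andP [? ?]];
  apply/andP; split; lra.
Qed.

Lemma clos_rst_invariant (T U : Type) (rel : T -> T -> Prop) (f : T -> U) :
  (forall a b, rel a b -> f a = f b) ->
  forall a b, clos_refl_sym_trans T rel a b -> f a = f b.
Proof. by move=> H a b; elim=> [? ? /H|//|? ? _ ->|? ? ? _ -> _ ->]. Qed.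

Lemma clos_rst_map (T U : Type) (relT : T -> T -> Prop) (relU : U -> U -> Prop)
  (f : T -> U) : (forall a b, relT a b -> relU (f a) (f b)) ->
  forall a b, clos_refl_sym_trans T relT a b ->
    clos_refl_sym_trans U relU (f a) (f b).
Proof.
move=> H a b; elim=> [? ? /H|?|? ? _|? ? ? _ h1 _ h2].
- exact: rst_step.
- exact: rst_refl.
- exact: rst_sym.
- exact: rst_trans h2.
Qed.

Section Representatives.
Variables (K : realType) (Y R : Type) (act : Y -> R -> Y) (op : R -> R -> R).

Definition tot_vertex (a : tot K Y R) : Y := (projT2 (projT1 a)).1.
Definition tot_labels (a : tot K Y R) : seq R := val (projT2 (projT1 a)).2.
Definition tot_coords (a : tot K Y R) : seq K := coords (set_val (projT2 a)).

Lemma size_tot_coords a : size (tot_coords a) = projT1 (projT1 a).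
Proof. exact: size_coords. Qed.

Lemma face_labels n (c : Y * (n.+1).-tuple R) (i : 'I_n.+1) (e : bool) :
  val (projT2 (face act op c i e)).2 =
  face_prefix op (take i c.2) (tnth c.2 i) e ++ drop i.+1 c.2.
Proof.
set x0 := tnth c.2 i; have hi : (i <= n)%N by rewrite -ltnS.
have htake : size (take i c.2) = i by rewrite size_takel // size_tuple ltnW.
apply: (@eq_from_nth _ x0).
  rewrite size_tuple size_cat size_drop size_tuple.
  by rewrite /face_prefix; case: (e); rewrite /= ?size_map htake; lia.
move=> k; rewrite size_tuple /= => hk.
case: e => /=; rewrite -[k]/(nat_of_ord (Ordinal hk)).
all: rewrite (nth_map (Ordinal hk)) ?size_enum_ord // nth_ord_enum;
  rewrite nth_cat ?size_map htake !(tnth_nth x0) /= /bump;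
  (case: ltnP => hki; [|by rewrite nth_drop add1n addSn subnKC]).
  by rewrite add0n (nth_map x0) ?htake // nth_take // -(tnth_nth x0 c.2 i).
by rewrite add0n nth_take.
Qed.

Lemma face_point_data n (c : Y * (n.+1).-tuple R) (i : 'I_n.+1) (e : bool)
  (ta : cubeT K n) (tb : cubeT K n.+1) :
  set_val tb = coface i e (set_val ta) ->
  let a := existT (fun c => cubeT K (projT1 c)) (face act op c i e) ta in
  let b := existT (fun c => cubeT K (projT1 c)) (existT _ n.+1 c) tb in
  let sa := take i (val c.2) in
  [/\ tot_labels b = sa ++ tnth c.2 i :: drop i.+1 (val c.2),
      tot_vertex a = face_vertex act (tot_vertex b) (tnth c.2 i) e,
      tot_labels a = face_prefix op sa (tnth c.2 i) e ++ drop i.+1 (val c.2),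
      tot_coords b = insert_at (size sa) e%:R (tot_coords a) &
      (size sa <= size (tot_coords a))%N].
Proof.
move=> htb a b sa.
have hsa : size sa = i by rewrite size_takel // size_tuple ltnW.
split.
- rewrite /tot_labels /= -{1}(cat_take_drop i (val c.2)).
  by rewrite (drop_nth (tnth c.2 i)) ?size_tuple // -tnth_nth.
- by rewrite /a; case: (e).
- exact: face_labels.
- by rewrite /tot_coords /= htb coords_coface hsa.
- by rewrite hsa size_tot_coords /= -ltnS.
Qed.

Lemma face_rel_data a b : face_rel act op a b ->
  exists (sa sb : seq R) (r : R) (e : bool),
  [/\ tot_labels b = sa ++ r :: sb,
      tot_vertex a = face_vertex act (tot_vertex b) r e,
      tot_labels a = face_prefix op sa r e ++ sb,
      tot_coords b = insert_at (size sa) e%:R (tot_coords a) &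
      (size sa <= size (tot_coords a))%N].
Proof.
move=> [n [c [i [e [ta [tb [-> [-> htb]]]]]]]].
by exists (take i (val c.2)), (drop i.+1 (val c.2)), (tnth c.2 i), e;
  apply: face_point_data.
Qed.

Lemma pi_glueP (a b : tot K Y R) :
  \pi_(realization K act op) a = \pi_(realization K act op) b <->
  clos_refl_sym_trans _ (face_rel act op) a b.
Proof. by split => [/eqmodP/asboolP //|h]; apply/eqmodP/asboolP. Qed.

Lemma repr_glue (a : tot K Y R) :
  clos_refl_sym_trans _ (face_rel act op) (repr (\pi_(realization K act op) a)) a.
Proof. by apply/pi_glueP; rewrite reprK. Qed.

End Representatives.

Section Invariance.
Variables (K : realType) (R : Type) (op : R -> R -> R) (eps : K) (ts : seq K).

Definition tot_pattern (Y : Type) (a : tot K Y R) : seq (option bool) :=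
  map (classify eps) (tot_coords a).

Lemma size_tot_pattern (Y : Type) (a : tot K Y R) :
  size (tot_pattern a) = size (tot_coords a).
Proof. exact: size_map. Qed.

Definition tot_collapse_vertex (Y : Type) (act : Y -> R -> Y) (a : tot K Y R) : Y :=
  collapse_vertex act (tot_vertex a) (tot_labels a) (tot_pattern a).

Definition tot_collapse_labels (Y : Type) (a : tot K Y R) : seq R :=
  collapse_labels op (tot_labels a) (tot_pattern a).

Definition near_pattern (Y : Type) (a : tot K Y R) : bool :=
  near eps (tot_coords a) (pattern_point (tot_pattern a) ts).

Hypothesis opA : forall x y z, op (op x y) z = op (op x z) (op y z).
Hypothesis eps_gt0 : 0 < eps.
Hypothesis eps_le : eps <= 4^-1.

Lemma collapse_face_invariant (Y : Type) (act : Y -> R -> Y)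
  (actA : forall y r r', act (act y r) r' = act (act y r') (op r r'))
  (a b : tot K Y R) : face_rel act op a b ->
  [/\ tot_collapse_vertex act a = tot_collapse_vertex act b,
      tot_collapse_labels a = tot_collapse_labels b &
      near_pattern a = near_pattern b].
Proof.
move=> /face_rel_data [sa [sb [r [e [hsb hva hsa hcb hsize]]]]].
have hpat : tot_pattern b = insert_at (size sa) (Some e) (tot_pattern a).
  by rewrite /tot_pattern hcb map_insert_at classify_nat.
have hs : size (take (size sa) (tot_pattern a)) = size sa.
  by rewrite size_takel // size_tot_pattern.
rewrite /tot_collapse_vertex /tot_collapse_labels /near_pattern hpat hsb.
rewrite /insert_at (collapse_vertex_face actA) // (collapse_labels_face opA) //.
rewrite cat_take_drop -hva -hsa; split => //.
rewrite hcb -/(insert_at _ _ _) pattern_point_insert_at ?size_tot_pattern //.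
by rewrite near_insert_at ?size_pattern_point ?size_tot_pattern ?subrr ?normr0.
Qed.

End Invariance.

Lemma coords_cube (K : realType) n (t : cubeT K n) v :
  v \in coords (set_val t) -> 0 <= v <= 1.
Proof. by move=> /mapP [k _ ->]; have := valP t; rewrite set_valE => /set_mem. Qed.

Lemma near_own_pattern (K : realType) (eps : K) (u : seq K) : 0 < eps ->
  (forall v, v \in u -> 0 <= v <= 1) ->
  near eps u (pattern_point (map (classify eps) u) [seq v <- u | classify eps v == None]).
Proof.
move=> he0; elim: u => [|v u IH] hu //=.
have /andP [v0 v1] : 0 <= v <= 1 by apply: hu; rewrite in_cons eqxx.
have {}IH := IH (fun w hw => hu w (mem_behead (hw : w \in behead (v :: u)))).
rewrite /classify; case: ifP => h1; first by rewrite /= subr0 ger0_norm // h1.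
case: ifP => h2 /=; last by rewrite subrr normr0 he0.
by rewrite mulr1n ltr_norml IH andbT; apply/andP; split; lra.
Qed.

Lemma exists_star_margin (K : realType) (Y R : Type) (op : R -> R -> R) (a : tot K Y R) :
  exists (eps : K) (ts : seq K),
  [/\ 0 < eps, eps <= 4^-1, within_margin eps ts,
      size (tot_collapse_labels op eps a) = size ts & near_pattern eps ts a].
Proof.
have [eps [he0 he1 hmargin]] := exists_margin (tot_coords a).
have hcube v : v \in tot_coords a -> 0 <= v <= 1 by apply: coords_cube.
exists eps, [seq v <- tot_coords a | classify eps v == None]; split => //.
- apply/allP => v; rewrite mem_filter /classify => /andP [hc hv].
  have /andP [v0 v1] := hcube v hv.
  move: hc; case: ifP => // h1; case: ifP => // h2 _.
  apply: hmargin => //; apply/andP; split; lra.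
- rewrite size_collapse_labels; first by rewrite size_filter count_map.
  by rewrite size_tot_pattern size_tot_coords size_tuple.
- exact: (near_own_pattern he0 hcube).
Qed.

Section Covering.
Variables (K : realType) (X R : Type) (op : R -> R -> R) (act : X -> R -> X)
  (p : X -> R) (ainv : X -> R -> X).
Hypothesis opA : forall x y z, op (op x y) z = op (op x z) (op y z).
Hypothesis opinj : forall r, injective (op^~ r).
Hypothesis actA : forall y r r', act (act y r) r' = act (act y r') (op r r').
Hypothesis ainvK : forall r, cancel (act^~ r) (ainv^~ r).
Hypothesis ainvK' : forall r, cancel (ainv^~ r) (act^~ r).
Hypothesis pact : forall x r, p (act x r) = op (p x) r.

Notation TB := (tot K R R).
Notation TE := (tot K X R).
Notation QB := (realization K op op).
Notation QE := (realization K act op).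
Notation glueB := (clos_refl_sym_trans TB (face_rel op op)).
Notation glueE := (clos_refl_sym_trans TE (face_rel act op)).
Notation pmap := (realization_map K act op op p).

Lemma tot_map_face (a b : TE) : face_rel act op a b ->
  face_rel op op (tot_map p a) (tot_map p b).
Proof.
move=> [n [c [i [e [ta [tb [-> [-> htb]]]]]]]].
exists n, (p c.1, c.2), i, e, ta, tb; split => //.
by case: e {htb}; rewrite /tot_map /cells_map /face /= ?pact.
Qed.

Lemma tot_map_glue (a b : TE) : glueE a b -> glueB (tot_map p a) (tot_map p b).
Proof. exact: (@clos_rst_map _ _ _ _ (tot_map p) tot_map_face). Qed.

Lemma pi_tot_map_repr (a : TE) :
  \pi_QB (tot_map p (repr (\pi_QE a))) = \pi_QB (tot_map p a).
Proof. by apply/pi_glueP; apply: tot_map_glue; apply: repr_glue. Qed.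

Lemma realization_map_continuous : continuous pmap.
Proof.
apply/continuousP => O hO; rewrite /open /= /quotient_open.
have -> : \pi_QE @^-1` (pmap @^-1` O) = tot_map p @^-1` (\pi_QB @^-1` O).
  by apply/seteqP; split => e /=; rewrite /realization_map pi_tot_map_repr.
apply/sigT_openP => c.
have hO' : open (\pi_QB @^-1` O) := hO.
by move/sigT_openP: hO' => /(_ (cells_map p c)).
Qed.

Definition unwind (x : X) (l : seq R) : X := foldr (fun r z => ainv z r) x l.

Lemma unwindK z l : unwind (foldl act z l) l = z.
Proof. by elim: l z => [|r l IH] z //=; rewrite IH ainvK. Qed.

Lemma foldl_unwind x l : foldl act (unwind x l) l = x.
Proof. by elim: l x => [|r l IH] x //=; rewrite ainvK' IH. Qed.

Lemma p_foldl_act z l : p (foldl act z l) = foldl op (p z) l.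
Proof. by elim: l z => [|r l IH] z //=; rewrite IH pact. Qed.

Lemma foldl_op_inj l : injective (fun y => foldl op y l).
Proof. by elim: l => [|r l IH] y y' //= /IH /opinj. Qed.

Lemma tot_vertex_congr (Y : Type) n (y y' : Y) (s : n.-tuple R) (t : cubeT K n) :
  y = y' ->
  existT (fun c => cubeT K (projT1 c))
    (existT (fun n => (Y * n.-tuple R)%type) n (y, s)) t =
  existT (fun c => cubeT K (projT1 c))
    (existT (fun n => (Y * n.-tuple R)%type) n (y', s)) t.
Proof. by move=> ->. Qed.

Section Star.
Variables (eps : K) (ts : seq K) (ystar : R) (sstar : seq R).
Hypothesis eps_gt0 : 0 < eps.
Hypothesis eps_le : eps <= 4^-1.
Hypothesis ts_margin : within_margin eps ts.
Hypothesis sstar_size : size sstar = size ts.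

Definition in_star (a : TB) : Prop :=
  [/\ tot_collapse_vertex eps op a = ystar, tot_collapse_labels op eps a = sstar &
      near_pattern eps ts a].

Definition star : set QB := [set u | in_star (repr u)].

Definition in_sheet (x : X) (e : TE) : Prop :=
  in_star (tot_map p e) /\ tot_collapse_vertex eps act e = x.

Definition sheet (x : X) : set QE := [set e | in_sheet x (repr e)].

Lemma in_star_glue (a b : TB) : glueB a b -> in_star a = in_star b.
Proof.
apply: clos_rst_invariant => {}a {}b hab.
have [h1 h2 h3] := collapse_face_invariant ts opA eps_gt0 eps_le opA hab.
by rewrite /in_star h1 h2 h3.
Qed.

Lemma in_sheet_glue x (a b : TE) : glueE a b -> in_sheet x a = in_sheet x b.
Proof.
move=> hab; rewrite /in_sheet (in_star_glue (tot_map_glue hab)).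
congr (_ /\ _); move: a b hab; apply: clos_rst_invariant => a b hab.
by have [-> _ _] := collapse_face_invariant ts opA eps_gt0 eps_le actA hab.
Qed.

Lemma preimage_star : \pi_QB @^-1` star = [set a | in_star a].
Proof.
by apply/seteqP; split => a; rewrite /= /star /= (in_star_glue (repr_glue op op a)).
Qed.

Lemma preimage_sheet x : \pi_QE @^-1` sheet x = [set e | in_sheet x e].
Proof.
by apply/seteqP; split => a; rewrite /= /sheet /= (in_sheet_glue x (repr_glue act op a)).
Qed.


Definition lift_cell (x : X) (c : cells R R) (pt : seq (option bool)) : cells X R :=
  existT _ (projT1 c) (unwind x (top_labels (val (projT2 c).2) pt), (projT2 c).2).

Definition lift_point (x : X) (a : TB) : TE :=
  existT (fun c => cubeT K (projT1 c))
    (lift_cell x (projT1 a) (tot_pattern eps a)) (projT2 a).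

Lemma lift_point_face x (a b : TB) :
  face_rel op op a b -> face_rel act op (lift_point x a) (lift_point x b).
Proof.
move=> [n [c [i [e [ta [tb [ha [hb htb]]]]]]]]; subst a b.
have /= [hsb _ hsa hcb hsize] := face_point_data op op c htb.
set a := existT _ (face op op c i e) ta; set b := existT _ (existT _ n.+1 c) tb.
have hpat : tot_pattern eps b =
    insert_at (size (take i (val c.2))) (Some e) (tot_pattern eps a).
  by rewrite /tot_pattern hcb map_insert_at classify_nat.
set z := unwind x (top_labels (tot_labels b) (tot_pattern eps b)).
have hz : unwind x (top_labels (tot_labels a) (tot_pattern eps a)) =
    face_vertex act z (tnth c.2 i) e.
  have : collapse_vertex act z (tot_labels b) (tot_pattern eps b) = x.
    exact: foldl_unwind.
  rewrite hpat hsb /insert_at (collapse_vertex_face actA); last first.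
    by rewrite size_takel // size_tot_pattern.
  by rewrite cat_take_drop -hsa /collapse_vertex => <-; rewrite unwindK.
exists n, (z, c.2), i, e, ta, tb; split => //.
by move: hz; rewrite /a; case: (e) => hz; apply: tot_vertex_congr.
Qed.

Lemma lift_point_glue x (a b : TB) : glueB a b -> glueE (lift_point x a) (lift_point x b).
Proof. exact: (@clos_rst_map _ _ _ _ (lift_point x) (@lift_point_face x)). Qed.

Lemma pi_lift_point_repr x (a : TB) :
  \pi_QE (lift_point x (repr (\pi_QB a))) = \pi_QE (lift_point x a).
Proof. by apply/pi_glueP; apply: lift_point_glue; apply: repr_glue. Qed.

Lemma tot_map_lift_point x (a : TB) :
  p x = ystar -> in_star a -> tot_map p (lift_point x a) = a.
Proof.
case: a => [[n [y s]] t] hx [hy _ _]; apply: tot_vertex_congr.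
apply: (@foldl_op_inj
  (top_labels (val s) (tot_pattern eps (existT _ (existT _ n (y, s)) t)))).
by rewrite -p_foldl_act foldl_unwind hx -hy.
Qed.

Lemma lift_point_tot_map x (e : TE) : in_sheet x e -> lift_point x (tot_map p e) = e.
Proof. by case: e => [[n [z s]] t] [_ <-]; apply: tot_vertex_congr; apply: unwindK. Qed.

Lemma in_sheet_lift_point x (a : TB) :
  p x = ystar -> in_star a -> in_sheet x (lift_point x a).
Proof. by move=> hx ha; split; [rewrite tot_map_lift_point | apply: foldl_unwind]. Qed.

Lemma p_tot_collapse_vertex (e : TE) : in_star (tot_map p e) ->
  p (tot_collapse_vertex eps act e) = ystar.
Proof. by case=> hy _ _; rewrite /tot_collapse_vertex /collapse_vertex p_foldl_act -hy. Qed.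

Definition cube_pattern n (t : cubeT K n) : seq (option bool) :=
  map (classify eps) (coords (set_val t)).

Lemma open_near_box n (v : seq K) : size v = n ->
  open [set t : cubeT K n | near eps (coords (set_val t)) v].
Proof.
move=> hv.
have -> : [set t : cubeT K n | near eps (coords (set_val t)) v] =
          set_val @^-1` ball (\row_k nth 0 v k) eps.
  apply/seteqP; split => t; rewrite /= /near all2_coords //.
  - move=> /forallP h; split => // i j.
    by rewrite (ord1 i) mxE /ball /= distrC; exact: h.
  - by move=> [_ h]; apply/forallP => k; have := h ord0 k; rewrite mxE /ball /= distrC.
have := @initial_continuous _ _ (set_val : cubeT K n -> 'rV[K]_n).
by move/continuousP; apply; exact: ball_open.
Qed.

(* By [classify_near] the slice is the union over admissible patterns of open boxes. *)
Lemma open_pattern_slice n (Q : seq (option bool) -> Prop)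
  (O : seq (option bool) -> set (cubeT K n)) :
  (forall pt, open (O pt)) ->
  (forall pt, Q pt -> size pt = n /\ (count_mem None pt <= size ts)%N) ->
  open [set t : cubeT K n | [/\ Q (cube_pattern t), O (cube_pattern t) t &
    near eps (coords (set_val t)) (pattern_point (cube_pattern t) ts)]].
Proof.
move=> hO hQ.
have -> : [set t : cubeT K n | [/\ Q (cube_pattern t), O (cube_pattern t) t &
            near eps (coords (set_val t)) (pattern_point (cube_pattern t) ts)]] =
  \bigcup_(pt in Q)
    (O pt `&` [set t | near eps (coords (set_val t)) (pattern_point pt ts)]).
  apply/seteqP; split => t /=; first by move=> [hq ho hn]; exists (cube_pattern t).
  move=> [pt hq [ho hn]]; have [_ hc] := hQ pt hq.
  by have -> : cube_pattern t = pt by apply: (classify_near eps_gt0 eps_le ts_margin hc).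
apply: bigcup_open => pt hq; apply: openI => //.
by apply: open_near_box; rewrite size_pattern_point; case: (hQ pt hq).
Qed.

Definition star_pattern (c : cells R R) (pt : seq (option bool)) : Prop :=
  [/\ collapse_vertex op (projT2 c).1 (val (projT2 c).2) pt = ystar,
      collapse_labels op (val (projT2 c).2) pt = sstar & size pt = projT1 c].

Lemma star_pattern_size c pt : star_pattern c pt ->
  size pt = projT1 c /\ (count_mem None pt <= size ts)%N.
Proof.
by case=> _ h hs; split => //; rewrite -sstar_size -h size_collapse_labels ?size_tuple.
Qed.

Lemma open_star : open star.
Proof.
rewrite /open /= /quotient_open preimage_star; apply/sigT_openP => c.
have -> : existT (fun c => cubeT K (projT1 c)) c @^-1` [set a | in_star a] =
  [set t | [/\ star_pattern c (cube_pattern t), setT t &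
             near eps (coords (set_val t)) (pattern_point (cube_pattern t) ts)]].
  apply/seteqP; split => t /=.
    by case=> h1 h2 h3; split => //; split => //; rewrite size_map size_coords.
  by case=> [[h1 h2 _] _ h3].
exact: (@open_pattern_slice _ (star_pattern c) (fun=> setT) (fun=> openT)
  (@star_pattern_size c)).
Qed.

Lemma open_sheet x : open (sheet x).
Proof.
rewrite /open /= /quotient_open preimage_sheet; apply/sigT_openP => c.
pose Q pt := star_pattern (cells_map p c) pt /\
  collapse_vertex act (projT2 c).1 (val (projT2 c).2) pt = x.
have -> : existT (fun c => cubeT K (projT1 c)) c @^-1` [set e | in_sheet x e] =
  [set t | [/\ Q (cube_pattern t), setT t &
             near eps (coords (set_val t)) (pattern_point (cube_pattern t) ts)]].
  apply/seteqP; split => t /=.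
    by case=> [[h1 h2 h3] h4]; split => //; split => //; split => //;
      rewrite size_map size_coords.
  by case=> [[[h1 h2 _] h4] _ h3].
apply: (@open_pattern_slice _ Q (fun=> setT) (fun=> openT)).
by move=> pt [/star_pattern_size].
Qed.

Definition lift_map (x : X) (u : QB) : QE := \pi_QE (lift_point x (repr u)).

Lemma lift_map_continuous x : {within star, continuous (lift_map x)}.
Proof.
rewrite continuous_open_subspace; last exact: open_star.
apply/continuous_inP; first exact: open_star.
move=> O hO; rewrite /open /= /quotient_open.
have -> : \pi_QB @^-1` (star `&` lift_map x @^-1` O) =
          [set a | in_star a /\ (\pi_QE @^-1` O) (lift_point x a)].
  by apply/seteqP; split => a /=; rewrite /star /lift_map /=
    (in_star_glue (repr_glue op op a)) pi_lift_point_repr.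
apply/sigT_openP => c.
have hOc : forall pt, open [set t : cubeT K (projT1 c) |
    (\pi_QE @^-1` O) (existT (fun c => cubeT K (projT1 c)) (lift_cell x c pt) t)].
  move=> pt; have hO' : open (\pi_QE @^-1` O) := hO.
  by move/sigT_openP: hO' => /(_ (lift_cell x c pt)).
have -> : existT (fun c => cubeT K (projT1 c)) c @^-1`
     [set a | in_star a /\ (\pi_QE @^-1` O) (lift_point x a)] =
  [set t | [/\ star_pattern c (cube_pattern t),
             (\pi_QE @^-1` O) (existT (fun c => cubeT K (projT1 c))
                                  (lift_cell x c (cube_pattern t)) t) &
             near eps (coords (set_val t)) (pattern_point (cube_pattern t) ts)]].
  apply/seteqP; split => t /=.
    by case=> [[h1 h2 h3] h4]; split => //; split => //; rewrite size_map size_coords.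
  by case=> [[h1 h2 _] h4 h3].
exact: (@open_pattern_slice _ (star_pattern c) _ hOc (@star_pattern_size c)).
Qed.

Lemma sheet_homeo x : p x = ystar -> homeo_onto pmap (sheet x) star.
Proof.
move=> hx; split; first exact: continuous_subspaceT realization_map_continuous.
exists (lift_map x); split; [|split; [|exact: lift_map_continuous]].
- move=> e he; split; last first.
    by rewrite /lift_map /realization_map pi_lift_point_repr lift_point_tot_map // reprK.
  by rewrite /star /= /realization_map (in_star_glue (repr_glue op op _)); case: he.
- move=> u hu; split.
    rewrite /sheet /lift_map /= (in_sheet_glue x (repr_glue act op _)).
    exact: in_sheet_lift_point.
  by rewrite /realization_map /lift_map pi_tot_map_repr tot_map_lift_point // reprK.
Qed.

Lemma star_evenly_covered : evenly_covered pmap star.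
Proof.
exists [set A | exists2 x, p x = ystar & A = sheet x].
split; [|split; [|split]].
- by move=> A [x _ ->]; exact: open_sheet.
- by move=> A A' [x _ ->] [x' _ ->] [e [[_ <-] [_ <-]]].
- apply/seteqP; split => e /=.
  + move=> he; have hstar : in_star (tot_map p (repr e)).
      by move: he; rewrite /star /= /realization_map (in_star_glue (repr_glue op op _)).
    exists (sheet (tot_collapse_vertex eps act (repr e))); last by split.
    by exists (tot_collapse_vertex eps act (repr e)) => //; exact: p_tot_collapse_vertex.
  + move=> [A [x _ ->] [he _]].
    by rewrite /star /= /realization_map (in_star_glue (repr_glue op op _)).
- by move=> A [x hx ->]; exact: sheet_homeo hx.
Qed.

End Star.

Lemma realization_map_evenly_covered_nbhs (b : QB) :
  exists U : set QB, open U /\ U b /\ evenly_covered pmap U.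
Proof.
have [eps [ts [he0 he1 hts hsz hnear]]] := exists_star_margin op (repr b).
exists (star eps ts (tot_collapse_vertex eps op (repr b))
                    (tot_collapse_labels op eps (repr b))).
split; first exact: open_star.
by split; [split | exact: star_evenly_covered].
Qed.

End Covering.

Theorem mainTheorem6 (K : realType) (X R : Type) (op : R -> R -> R)
  (act : X -> R -> X) (p : X -> R) :
  is_rack op ->
  is_rack_action op act ->
  (forall (x : X) (r : R), p (act x r) = op (p x) r) ->
  arcwise_connected K (realization K op op) ->
  locally_arcwise_connected K (realization K op op) ->
  covering_map (realization_map K act op op p).
Proof.
(* Local triviality does not need the connectivity of B_R(R). *)
move=> [opbij opA] [actbij actA] pact _ _.
have [ainv ainvK ainvK'] : exists2 ainv : X -> R -> X,
    (forall r, cancel (act^~ r) (ainv^~ r)) & (forall r, cancel (ainv^~ r) (act^~ r)).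
  have /boolp.choice [g hg] r : exists g : X -> X, cancel (act^~ r) g /\ cancel g (act^~ r).
    by have [g h1 h2] := actbij r; exists g.
  by exists (fun x r => g r x) => r; [exact: (hg r).1 | exact: (hg r).2].
have opinj r : injective (op^~ r) by apply: bij_inj.
split; first exact: realization_map_continuous.
exact: realization_map_evenly_covered_nbhs.
Qed.
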